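(* Let $i\ge0$, let $\mathbf{e}_i$ be a 1-dimensional error pattern at level $i$, let $P_i$ be its number of paths, and let $\mathbf{e}_{i+1}$ be a 1-dimensional preimage of $\mathbf{e}_i$. Then $\mathrm{wt}(\mathbf{e}_{i+1})\ge\mathrm{wt}(\mathbf{e}_i)+P_i$.
   Context: 1-dimensional model. For $j\ge0$, the line at level $j$ is the cycle with vertex set $\mathbb{Z}/2^j\mathbb{Z}$ and edges $\{v,v+1\}$, $v\in\mathbb{Z}/2^j\mathbb{Z}$ (for $j=0$, one vertex with a loop edge). A 1-dimensional error pattern at level $j$ is a subset of these edges; $\mathrm{wt}$ is its number of edges; its syndrome is the set of vertices incident to an odd number of its edges. The number of paths of a pattern is the number of connected components (maximal runs of consecutive edges) of the pattern, except that it is $0$ when the pattern is the whole cycle. At level $j+1$, block $m\in\mathbb{Z}/2^j\mathbb{Z}$ consists of the left edge $\{2m,2m+1\}$ and right edge $\{2m+1,2m+2\}$ and corresponds to the edge $\{m,m+1\}$ at level $j$. One reduction stage applied to a pattern $\mathbf{f}$ at level $j+1$ with syndrome $S$: (a) for every block, if $2m+1,2m+2\in S$, flip (add mod 2) the right edge and remove both from $S$; (b) then for every block, if $2m+1$ is still in $S$, flip the left edge. In the resulting pattern $\mathbf{f}'$ each block contains $0$ or $2$ edges; the image of $\mathbf{f}$ is the pattern at level $j$ containing $\{m,m+1\}$ iff block $m\subseteq\mathbf{f}'$. A pattern $\mathbf{f}$ at level $j+1$ is a 1-dimensional preimage of $\mathbf{g}$ at level $j$ if the image of $\mathbf{f}$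 is $\mathbf{g}$. *)

From mathcomp Require Import all_boot.
Set Implicit Arguments. Unset Strict Implicit. Unset Printing Implicit Defensive.

(* Level j: the cycle Z/2^j Z.  Vertices and edges are both indexed by 'I_(2^j);
   edge v is the edge {v, v+1}. A pattern is a set of edges. *)

Lemma pow2_gt0 (j : nat) : 0 < 2 ^ j.
Proof. by rewrite expn_gt0. Qed.

Definition mk (j k : nat) : 'I_(2 ^ j) := Ordinal (ltn_pmod k (pow2_gt0 j)).

Definition pattern (j : nat) := {set 'I_(2 ^ j)}.

Definition wt (j : nat) (f : pattern j) : nat := #|f|.

Definition incident (j : nat) (e u : 'I_(2 ^ j)) : bool :=
  (u == e) || (u == mk j (e + 1)).

Definition syndrome (j : nat) (f : pattern j) : {set 'I_(2 ^ j)} :=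
  [set u | odd #|[set e in f | incident e u]|].

(* number of paths: number of maximal runs of consecutive edges, i.e. number of
   edges v in g whose predecessor edge v-1 is not in g; 0 for the whole cycle *)
Definition npaths (j : nat) (g : pattern j) : nat :=
  if g == setT then 0
  else #|[set v in g | mk j (v + 2 ^ j - 1) \notin g]|.

(* Block m at level j+1: left edge {2m,2m+1}, right edge {2m+1,2m+2}. *)
Definition ledge (j : nat) (m : 'I_(2 ^ j)) : 'I_(2 ^ j.+1) := mk j.+1 (2 * m).
Definition redge (j : nat) (m : 'I_(2 ^ j)) : 'I_(2 ^ j.+1) := mk j.+1 (2 * m + 1).
Definition vodd (j : nat) (m : 'I_(2 ^ j)) : 'I_(2 ^ j.+1) := mk j.+1 (2 * m + 1).
Definition veven (j : nat) (m : 'I_(2 ^ j)) : 'I_(2 ^ j.+1) := mk j.+1 (2 * m + 2).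

Definition symdiff (T : finType) (A B : {set T}) : {set T} := (A :\: B) :|: (B :\: A).

Definition cond_a (j : nat) (f : pattern j.+1) (m : 'I_(2 ^ j)) : bool :=
  (vodd m \in syndrome f) && (veven m \in syndrome f).

Definition flips_a (j : nat) (f : pattern j.+1) : {set 'I_(2 ^ j.+1)} :=
  [set redge m | m in [set m | cond_a f m]].
Definition syndrome_a (j : nat) (f : pattern j.+1) : {set 'I_(2 ^ j.+1)} :=
  syndrome f :\: [set u | [exists m, cond_a f m && ((u == vodd m) || (u == veven m))]].
Definition flips_b (j : nat) (f : pattern j.+1) : {set 'I_(2 ^ j.+1)} :=
  [set ledge m | m in [set m : 'I_(2 ^ j) | vodd m \in syndrome_a f]].

Definition reduced (j : nat) (f : pattern j.+1) : pattern j.+1 :=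
  symdiff (symdiff f (flips_a f)) (flips_b f).

Definition image1 (j : nat) (f : pattern j.+1) : pattern j :=
  [set m | (ledge m \in reduced f) && (redge m \in reduced f)].

Definition is_preimage (j : nat) (f : pattern j.+1) (g : pattern j) : Prop :=
  image1 f = g.

From mathcomp Require Import all_boot zify.

(* A reduction stage acts block by block: block m of the preimage survives in the
   image iff it is full, or it holds exactly one edge and the left edge of block m+1
   is present.  So every surviving block carries an edge, and a full one carries an
   extra edge.  Count the paths of the image by their last edges m (on a cycle there
   are as many path ends as path starts): if the left edge of block m+1 is absent,
   block m is full; otherwise block m+1 is dropped although it holds an edge.  Each
   extra edge found this way is charged to a single path end. *)

Lemma card_nat_sum (T : finType) (A : {pred T}) : #|A| = \sum_x (x \in A).
Proof. by rewrite -sum1_card big_mkcond; apply: eq_bigr => x _; case: (x \in A). Qed.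

Lemma card_setI2 (T : finType) (A : {set T}) u p : u != p ->
  #|A :&: [set u; p]| = (u \in A) + (p \in A).
Proof.
move=> neq_up; rewrite -sum1_card (eq_bigl [pred x in [set u; p] | x \in A]); last first.
  by move=> x; rewrite !inE andbC.
by rewrite big_mkcondr /= big_setU1 ?inE // big_set1; case: (u \in A); case: (p \in A).
Qed.

Lemma in_symdiff (T : finType) (A B : {set T}) x :
  (x \in symdiff A B) = (x \in A) (+) (x \in B).
Proof. by rewrite !inE; case: (x \in A); case: (x \in B). Qed.

Lemma val_ordS n (x : 'I_n) : val (ordS x) = x.+1 %% n.
Proof. by []. Qed.

Lemma ord_pred_neq n (u : 'I_n) : 1 < n -> ord_pred u != u.
Proof.
move=> n_gt1; apply/eqP => pred_u; have := congr1 val (ord_predK u).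
rewrite pred_u /=; case: (ltnP u.+1 n) => [lt_un | ge_un].
  by rewrite modn_small //; lia.
have -> : u.+1 = n by apply/eqP; rewrite eqn_leq ltn_ord.
by rewrite modnn; lia.
Qed.

Lemma card_run_starts_ends n (g : {set 'I_n}) :
  #|[set v in g | ord_pred v \notin g]| = #|[set v in g | ordS v \notin g]|.
Proof.
have -> : [set v in g | ord_pred v \notin g] = @ordS n @: (@ordS n @^-1: g :\: g).
  apply/setP => v; rewrite !inE; apply/andP/imsetP => [[gv gpv] | [w]].
    by exists (ord_pred v); rewrite ?ord_predK // !inE ord_predK gv gpv.
  by rewrite !inE => /andP[gw gSw] ->; rewrite ordSK.
have -> : [set v in g | ordS v \notin g] = g :\: @ordS n @^-1: g.
  by apply/setP => v; rewrite !inE andbC.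
rewrite card_imset; last exact: ordS_inj.
apply/eqP; rewrite -(eqn_add2l #|g :&: @ordS n @^-1: g|) cardsID setIC cardsID.
by rewrite card_preimset //; exact: ordS_inj.
Qed.

Lemma mk_addn1 j (e : 'I_(2 ^ j)) : mk j (e + 1) = ordS e.
Proof. by apply/val_inj; rewrite /= addn1. Qed.

Lemma mk_subn1 j (e : 'I_(2 ^ j)) : mk j (e + 2 ^ j - 1) = ord_pred e.
Proof. by apply/val_inj; rewrite /= -subn1. Qed.

Lemma npaths_le_run_ends j (g : pattern j) :
  npaths g <= #|[set v in g | ordS v \notin g]|.
Proof.
rewrite /npaths; case: ifP => // _.
by rewrite -card_run_starts_ends; under eq_finset do rewrite mk_subn1.
Qed.

Lemma in_syndrome j (f : pattern j.+1) u :
  (u \in syndrome f) = (u \in f) (+) (ord_pred u \in f).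
Proof.
have incidentE e : incident e u = (e \in [set u; ord_pred u]).
  rewrite /incident mk_addn1 !inE eq_sym; congr (_ || _).
  by apply/eqP/eqP => [-> | ->]; rewrite ?ordSK ?ord_predK.
have neq_pred : u != ord_pred u.
  by rewrite eq_sym ord_pred_neq // expnS; have := pow2_gt0 j; lia.
rewrite inE; under eq_finset do rewrite incidentE -in_setI.
by rewrite cardsE card_setI2 // oddD !oddb.
Qed.

Section Blocks.
Variable i : nat.
Implicit Types m : 'I_(2 ^ i).

Lemma val_ledge m : ledge m = 2 * m :> nat.
Proof. by rewrite /= modn_small // expnS ltn_mul2l /=. Qed.

Lemma val_redge m : redge m = (2 * m).+1 :> nat.
Proof. rewrite /= modn_small ?addn1 //; have := ltn_ord m; rewrite expnS; lia. Qed.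

Lemma ledge_inj : injective (@ledge i).
Proof.
move=> m m' /(congr1 (@nat_of_ord _)); rewrite !val_ledge => /eqP.
by rewrite eqn_mul2l => /eqP/val_inj.
Qed.

Lemma redge_inj : injective (@redge i).
Proof.
move=> m m' /(congr1 (@nat_of_ord _)); rewrite !val_redge => -[] /eqP.
by rewrite eqn_mul2l => /eqP/val_inj.
Qed.

Lemma ledge_neq_redge m m' : ledge m != redge m'.
Proof. by apply/eqP => /(congr1 (@nat_of_ord _)); rewrite val_ledge val_redge; lia. Qed.

Lemma ledge_or_redge (x : 'I_(2 ^ i.+1)) :
  (x \in [set ledge m | m : 'I_(2 ^ i)]) || (x \in [set redge m | m : 'I_(2 ^ i)]).
Proof.
have x_half : x %/ 2 < 2 ^ i by have := ltn_ord x; rewrite [in X in _ < X]expnS; lia.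
have := divn_eq x 2; rewrite modn2.
case: (odd x) => x_eq; apply/orP; [right | left]; apply/imsetP;
  exists (Ordinal x_half) => //; apply/ord_inj; rewrite ?val_ledge ?val_redge /=; lia.
Qed.

Lemma vodd_ordS m : vodd m = ordS (ledge m).
Proof. by apply/val_inj; rewrite val_ordS val_ledge /= addn1. Qed.

Lemma veven_ordS m : veven m = ordS (redge m).
Proof. by apply/val_inj; rewrite val_ordS val_redge /= addn2. Qed.

Lemma veven_ledge m : veven m = ledge (ordS m).
Proof. by apply/val_inj; rewrite /= expnS muln_modr modn_mod mulnS addn2 add2n. Qed.

Lemma wt_blocks (f : pattern i.+1) :
  wt f = \sum_m ((ledge m \in f) + (redge m \in f)).
Proof.
have disjoint_blocks :
    [disjoint [set ledge m | m : 'I_(2 ^ i)] & [set redge m | m : 'I_(2 ^ i)]].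
  rewrite disjoint_subset; apply/subsetP => _ /imsetP[m _ ->]; rewrite inE.
  by apply/imsetP => -[m' _ /eqP]; rewrite (negbTE (ledge_neq_redge _ _)).
rewrite /wt card_nat_sum -(eq_bigl _ _ ledge_or_redge) bigU //.
by rewrite (big_imset _ (in2W ledge_inj)) (big_imset _ (in2W redge_inj)) -big_split.
Qed.

Variable f : pattern i.+1.

Lemma in_syndrome_vodd m : (vodd m \in syndrome f) = (ledge m \in f) (+) (redge m \in f).
Proof. by rewrite in_syndrome {2}vodd_ordS ordSK addbC. Qed.

Lemma in_syndrome_veven m :
  (veven m \in syndrome f) = (redge m \in f) (+) (ledge (ordS m) \in f).
Proof. by rewrite in_syndrome {2}veven_ordS ordSK veven_ledge addbC. Qed.

Lemma in_syndrome_a_vodd m :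
  (vodd m \in syndrome_a f) = (vodd m \in syndrome f) && ~~ cond_a f m.
Proof.
rewrite !inE andbC; congr (_ && ~~ _); apply/existsP/idP => [[m'] | cond_m]; last first.
  by exists m; rewrite cond_m eqxx.
case/andP=> cond_m' /orP[/eqP/redge_inj -> // | ].
by rewrite veven_ledge eq_sym (negbTE (ledge_neq_redge _ _)).
Qed.

Lemma ledge_in_reduced m :
  (ledge m \in reduced f) = (ledge m \in f) (+) (vodd m \in syndrome_a f).
Proof.
rewrite !in_symdiff mem_imset; last exact: ledge_inj.
suff -> : ledge m \in flips_a f = false by rewrite addbF !inE.
by apply/imsetP => -[m' _ /eqP]; rewrite (negbTE (ledge_neq_redge _ _)).
Qed.

Lemma redge_in_reduced m : (redge m \in reduced f) = (redge m \in f) (+) cond_a f m.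
Proof.
rewrite !in_symdiff mem_imset; last exact: redge_inj.
suff -> : redge m \in flips_b f = false by rewrite addbF !inE.
by apply/imsetP => -[m' _ /eqP]; rewrite eq_sym (negbTE (ledge_neq_redge _ _)).
Qed.
End Blocks.

Definition block_kept (l r l' : bool) : bool := (l && r) || ((l (+) r) && l').

Lemma mem_image1 i (f : pattern i.+1) (m : 'I_(2 ^ i)) :
  (m \in image1 f) = block_kept (ledge m \in f) (redge m \in f) (ledge (ordS m) \in f).
Proof.
rewrite inE ledge_in_reduced redge_in_reduced in_syndrome_a_vodd /cond_a.
rewrite in_syndrome_vodd in_syndrome_veven /block_kept.
by case: (ledge m \in f); case: (redge m \in f); case: (ledge (ordS m) \in f).
Qed.

Section RunCharging.
Variables (n : nat) (l r : 'I_n -> bool).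
Let kept m := block_kept (l m) (r m) (l (ordS m)).

Lemma block_charge m : kept m + (kept m && l m && r m) + (~~ kept m && l m) <= l m + r m.
Proof. by rewrite /kept /block_kept; case: (l m); case: (r m); case: (l (ordS m)). Qed.

Lemma run_end_charge m :
  kept m && ~~ kept (ordS m) <= (kept m && l m && r m) + (~~ kept (ordS m) && l (ordS m)).
Proof.
move: (kept (ordS m)) => kept_next; rewrite /kept /block_kept.
by case: (l m); case: (r m); case: (l (ordS m)); case: kept_next.
Qed.

Lemma sum_kept_run_ends_le :
  \sum_m kept m + \sum_m (kept m && ~~ kept (ordS m)) <= \sum_m (l m + r m).
Proof.
apply: leq_trans _ (leq_sum _ (fun m _ => block_charge m)).
rewrite !big_split /= -addnA leq_add2l.
apply: leq_trans (leq_sum _ (fun m _ => run_end_charge m)) _.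
by rewrite big_split /= [X in _ <= _ + X](reindex_inj (@ordS_inj n)).
Qed.
End RunCharging.

Theorem lemma1 (i : nat) (ei : pattern i) (ei1 : pattern i.+1) :
  is_preimage ei1 ei -> wt ei + npaths ei <= wt ei1.
Proof.
move=> <-; rewrite wt_blocks.
pose l m := ledge m \in ei1; pose r m := redge m \in ei1.
apply: leq_trans _ (sum_kept_run_ends_le _ l r).
apply: leq_add; first by rewrite /wt card_nat_sum; under eq_bigr do rewrite mem_image1.
apply: leq_trans (npaths_le_run_ends _ _) _.
by rewrite card_nat_sum; under eq_bigr do rewrite in_set !mem_image1.
Qed.
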